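(* Under the setup below, for every $\mathbf{v}\in\mathbb{R}^E$, letting $\mathbf{d}=\mathbf{B}^\top\mathbf{W}^{1/2}\mathbf{v}$, $\mathbf{z}=\widetilde{\mathbf{\Gamma}}\mathbf{\Pi}^{(\eta-1)}\cdots\mathbf{\Pi}^{(0)}\mathbf{d}$ and $\widetilde{\mathbf{f}}=\sum_{H\in\mathcal{T}}\mathbf{M}^{(H)}\mathbf{z}|_{F_H}$, we have $\mathbf{B}^\top\mathbf{W}^{1/2}\widetilde{\mathbf{f}}=\mathbf{B}^\top\mathbf{W}^{1/2}\mathbf{v}$.
   Context: Setup. $G=(V,E)$ is a connected undirected graph with $|V|=n$, positive edge weights, $\mathbf{W}=\mathrm{diag}(\mathbf{w})$, signed incidence matrix $\mathbf{B}\in\mathbb{R}^{E\times V}$; for a region (edge-induced subgraph) $H$, $\mathbf{B}[H]$ is $\mathbf{B}$ with rows of edges not in $E(H)$ set to zero. All matrices/vectors are padded with zeros to $V$- or $E$-indexed dimensions; $\mathbf{x}|_S$ is $\mathbf{x}$ on $S$ and zero elsewhere; $\mathbf{I}$ is the $n\times n$ identity; $\mathbf{M}_{S,T}$ is the submatrix with rows $S$, columns $T$; $\mathbf{M}^{-1}$ is the Moore–Penrose pseudoinverse. $\mathcal{T}$ is a separator tree of $G$: a rooted binary tree of regions $H$ with vertex sets $\partial H$, $S(H)$, $F_H$, where the root is $G$ with $\partial G=\emptyset$, $F_G=S(G)$; a non-leaf node $H$ has two children $D_1,D_2$ whose edge sets partition $E(H)$ (no isolated vertices) with $V(D_1)\cap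 V(D_2)=S(H)$, $\partial D_j=(\partial H\cup S(H))\cap V(D_j)$, $F_H=S(H)\setminus\partial H$; a leaf has constantly many edges, $S(H)=\emptyset$, $F_H=V(H)\setminus\partial H$. The level $\eta(H)$ is the maximum number of edges on a tree path from $H$ down to a descendant (leaves 0); $\eta$ is the height; $\mathcal{T}(i)$ is the set of level-$i$ nodes; $\{F_H\}$ partitions $V$. Recursive Laplacians. For a leaf $H$, $\mathbf{L}^{(H)}=\mathbf{B}[H]^\top\mathbf{W}\mathbf{B}[H]$. For each node $D$ we are given a Laplacian $\widetilde{\mathrm{SC}}(\mathbf{L}^{(D)},\partial D)$ supported on $\partial D$; for a non-leaf $H$ with children $D_1,D_2$, $\mathbf{L}^{(H)}=\widetilde{\mathrm{SC}}(\mathbf{L}^{(D_1)},\partial D_1)+\widetilde{\mathrm{SC}}(\mathbf{L}^{(D_2)},\partial D_2)$. Assume each $\mathbf{L}^{(H)}$ is the Laplacian of a connected graph on vertex set $\partial H\cup F_H$. Operators. $\mathbf{X}^{(H)}=\mathbf{L}^{(H)}_{\partial H,F_H}(\mathbf{L}^{(H)}_{F_H,F_H})^{-1}$; $\mathbf{\Pi}^{(i)}=\mathbf{I}-\sum_{H\in\mathcal{T}(i)}\mathbf{X}^{(H)}$ for $0\le i\le\eta-1$; $\widetilde{\mathbf{\Gamma}}=\sum_{H\in\mathcal{T}}(\mathbf{L}^{(H)}_{F_H,F_H})^{-1}$. For a node $D$ with parent $P$, $\mathbf{M}_{(D,P)}=(\mathbf{L}^{(D)})^{-1}\widetilde{\mathrm{SC}}(\mathbf{L}^{(D)},\partial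 D)$; $\mathbf{M}^{(H)}=\mathbf{W}^{1/2}\mathbf{B}[H]$ for a leaf $H$, and $\mathbf{M}^{(H)}=\mathbf{M}^{(D_1)}\mathbf{M}_{(D_1,H)}+\mathbf{M}^{(D_2)}\mathbf{M}_{(D_2,H)}$ for a non-leaf $H$ with children $D_1,D_2$. *)

From HB Require Import structures.
From mathcomp Require Import all_boot all_order all_algebra.
From Stdlib Require Import ClassicalEpsilon.
Set Implicit Arguments.
Unset Strict Implicit.
Unset Printing Implicit Defensive.
Import GRing.Theory Num.Theory.
Local Open Scope ring_scope.

(* signed incidence matrix B in R^{E x V} (edge e oriented from tl e to hd e) *)
Definition incidence (R : nzRingType) (n m : nat) (tl hd : 'I_m -> 'I_n)
  : 'M[R]_(m, n) :=
  \matrix_(e, v) ((v == tl e)%:R - (v == hd e)%:R).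

Definition Wmx (R : rcfType) (m : nat) (w : 'I_m -> R) : 'M[R]_m :=
  diag_mx (\row_i w i).
Definition sqrtW (R : rcfType) (m : nat) (w : 'I_m -> R) : 'M[R]_m :=
  diag_mx (\row_i Num.sqrt (w i)).

Definition gadj (n m : nat) (tl hd : 'I_m -> 'I_n) : rel 'I_n :=
  fun u v => [exists e, ((tl e == u) && (hd e == v)) || ((tl e == v) && (hd e == u))].
Definition graph_connected (n m : nat) (tl hd : 'I_m -> 'I_n) : Prop :=
  forall u v, connect (gadj tl hd) u v.

Definition Vset (n m : nat) (tl hd : 'I_m -> 'I_n) (E : {set 'I_m}) : {set 'I_n} :=
  [set v | [exists e in E, (tl e == v) || (hd e == v)]].

(* B[H]: rows of edges not in E(H) set to zero *)
Definition restrict_rows (R : nzRingType) (m n : nat) (E : {set 'I_m})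
  (B : 'M[R]_(m, n)) : 'M[R]_(m, n) :=
  \matrix_(e, v) (if e \in E then B e v else 0).

(* M_{S,T} padded with zeros to n x n *)
Definition submx_pad (R : nzRingType) (n : nat) (A : 'M[R]_n) (S T : {set 'I_n})
  : 'M[R]_n :=
  \matrix_(i, j) (if (i \in S) && (j \in T) then A i j else 0).

Definition vrestrict (R : nzRingType) (n : nat) (x : 'cV[R]_n) (S : {set 'I_n})
  : 'cV[R]_n :=
  \col_i (if i \in S then x i 0 else 0).

Definition penrose (R : nzRingType) (n : nat) (A X : 'M[R]_n) : Prop :=
  [/\ A *m X *m A = A, X *m A *m X = X,
      (A *m X)^T = A *m X & (X *m A)^T = X *m A].

Definition pinv (R : nzRingType) (n : nat) (A : 'M[R]_n) : 'M[R]_n :=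
  epsilon (inhabits 0) (penrose A).

Definition is_lap (R : numDomainType) (n : nat) (L : 'M[R]_n) : Prop :=
  [/\ forall i j, L i j = L j i,
      forall i j, i != j -> L i j <= 0 &
      forall i, \sum_j L i j = 0].

Definition supported_on (R : nzRingType) (n : nat) (L : 'M[R]_n) (S : {set 'I_n})
  : Prop :=
  forall i j, (i \notin S) || (j \notin S) -> L i j = 0.

(* L is the Laplacian of a connected graph on vertex set S
   (edges of that graph: pairs i,j with L i j < 0) *)
Definition connected_lap_on (R : numDomainType) (n : nat) (L : 'M[R]_n)
  (S : {set 'I_n}) : Prop :=
  [/\ is_lap L, supported_on L S &
      forall i j, i \in S -> j \in S -> connect (fun a b => L a b < 0) i j].

Record stree (N : finType) (n m : nat) := STree {
  st_root : N;
  st_ch : N -> option (N * N);   (* None: leaf; Some (D1, D2): children *)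
  st_E : N -> {set 'I_m};
  st_bd : N -> {set 'I_n};
  st_S : N -> {set 'I_n};
  st_F : N -> {set 'I_n}
}.

Section Tree.
Variables (N : finType) (n m : nat) (T : stree N n m).

Definition chrel : rel N := fun H D =>
  match st_ch T H with Some (D1, D2) => (D == D1) || (D == D2) | None => false end.

Fixpoint lvl_fuel (k : nat) (H : N) : nat :=
  match k with
  | 0 => 0
  | k'.+1 => match st_ch T H with
             | None => 0
             | Some (D1, D2) => (maxn (lvl_fuel k' D1) (lvl_fuel k' D2)).+1
             end
  end.

(* eta(H): max number of edges on a tree path from H down to a descendant *)
Definition level (H : N) : nat := lvl_fuel #|N| H.
Definition height : nat := level (st_root T).

End Tree.

Definition is_septree (N : finType) (n m : nat) (tl hd : 'I_m -> 'I_n)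
  (T : stree N n m) : Prop :=
  let V := Vset tl hd in
  (forall H, connect (chrel T) (st_root T) H) /\
  (forall H1 H2 D, chrel T H1 D -> chrel T H2 D -> H1 = H2) /\
  (forall H D, chrel T H D -> ~~ connect (chrel T) D H) /\
  st_E T (st_root T) = setT /\ st_bd T (st_root T) = set0 /\
  (forall H D1 D2, st_ch T H = Some (D1, D2) ->
     [/\ D1 != D2,
         st_E T D1 :|: st_E T D2 = st_E T H /\ [disjoint st_E T D1 & st_E T D2],
         V (st_E T D1) :&: V (st_E T D2) = st_S T H,
         st_bd T D1 = (st_bd T H :|: st_S T H) :&: V (st_E T D1) /\
         st_bd T D2 = (st_bd T H :|: st_S T H) :&: V (st_E T D2) &
         st_F T H = st_S T H :\: st_bd T H]) /\
  (forall H, st_ch T H = None ->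
     st_S T H = set0 /\ st_F T H = V (st_E T H) :\: st_bd T H) /\
  (forall v, exists H, v \in st_F T H) /\
  (forall H1 H2 v, v \in st_F T H1 -> v \in st_F T H2 -> H1 = H2).

(* recursive Laplacians L^(H) and the given approximate Schur complements SCt D *)
Definition rec_laplacians (R : rcfType) (N : finType) (n m : nat)
  (tl hd : 'I_m -> 'I_n) (w : 'I_m -> R) (T : stree N n m)
  (L SCt : N -> 'M[R]_n) : Prop :=
  let B := incidence R tl hd in
  (forall H, st_ch T H = None ->
     L H = (restrict_rows (st_E T H) B)^T *m Wmx w *m restrict_rows (st_E T H) B) /\
  (forall D, is_lap (SCt D) /\ supported_on (SCt D) (st_bd T D)) /\
  (forall H D1 D2, st_ch T H = Some (D1, D2) -> L H = SCt D1 + SCt D2) /\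
  (forall H, connected_lap_on (L H) (st_bd T H :|: st_F T H)).

Section Ops.
Variables (R : rcfType) (N : finType) (n m : nat) (tl hd : 'I_m -> 'I_n)
  (w : 'I_m -> R) (T : stree N n m) (L SCt : N -> 'M[R]_n).

Definition LFFinv (H : N) : 'M[R]_n :=
  pinv (submx_pad (L H) (st_F T H) (st_F T H)).

Definition Xop (H : N) : 'M[R]_n :=
  submx_pad (L H) (st_bd T H) (st_F T H) *m LFFinv H.

Definition Piop (i : nat) : 'M[R]_n :=
  1%:M - \sum_(H | level T H == i) Xop H.

Fixpoint Pi_apply (k : nat) (d : 'cV[R]_n) : 'cV[R]_n :=
  match k with
  | 0 => d
  | k'.+1 => Piop k' *m Pi_apply k' d
  end.

Definition Gamma : 'M[R]_n := \sum_H LFFinv H.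

Definition Mlink (D : N) : 'M[R]_n := pinv (L D) *m SCt D.

Definition leafM (H : N) : 'M[R]_(m, n) :=
  sqrtW w *m restrict_rows (st_E T H) (incidence R tl hd).

Fixpoint Mrec (k : nat) (H : N) : 'M[R]_(m, n) :=
  match k with
  | 0 => leafM H
  | k'.+1 => match st_ch T H with
             | None => leafM H
             | Some (D1, D2) => Mrec k' D1 *m Mlink D1 + Mrec k' D2 *m Mlink D2
             end
  end.

Definition Mop (H : N) : 'M[R]_(m, n) := Mrec (level T H) H.

End Ops.

From mathcomp Require Import all_boot all_order all_algebra.
From Stdlib Require Import ClassicalEpsilon.
From mathcomp Require Import ring zify.
Set Implicit Arguments.
Unset Strict Implicit.
Unset Printing Implicit Defensive.
Import Order.TTheory GRing.Theory Num.Theory.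
Local Open Scope ring_scope.

(* Let u = Pi^(eta-1) ... Pi^(0) d.  Boundary vertices of H' are eliminated
   strictly above H', so X^(H) X^(H') = 0 when level H <= level H'; hence
   u = d - sum_H X^(H) u.  Going up the tree, B^T W^(1/2) M^(H) = L^(H), because
   L^(D) (L^(D))^+ fixes the columns of SC(L^(D), bd D): they sum to zero and
   live in the support of the connected Laplacian L^(D).  As z|_(F_H) =
   (L^(H)_(F_H,F_H))^+ u, the contribution of H is
   L^(H) (L^(H)_(F_H,F_H))^+ u = u|_(F_H) + X^(H) u; the first term is right since
   u|_(F_H) is orthogonal to the kernel of L^(H)_(F_H,F_H): trivially when H has
   a boundary vertex, and otherwise because u sums to zero on F_H (the subtree
   of such an H covers a union of components of G, on which d and every
   correction X^(H') u have total zero).  Summing over the partition {F_H}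
   gives u + (d - u) = d. *)

Section Pseudoinverse.
Variable R : rcfType.

Lemma gram_mx_eq0 n p (K : 'M[R]_(n, p)) : K^T *m K = 0 -> K = 0.
Proof.
move=> KK0; apply/matrixP => i j; rewrite mxE.
have : \sum_(k < n) K k j ^+ 2 = 0.
  have := congr1 (fun M : 'M_p => M j j) KK0; rewrite !mxE => Kjj0.
  by rewrite -[RHS]Kjj0; apply: eq_bigr => k _; rewrite !mxE expr2.
move/psumr_eq0P => /(_ (fun k _ => sqr_ge0 _)) /(_ i isT) /eqP.
by rewrite sqrf_eq0 => /eqP.
Qed.

Lemma row_free_gram_unit n p (D : 'M[R]_(n, p)) : row_free D -> D *m D^T \in unitmx.
Proof.
case/row_freeP => D' DD'; rewrite -row_free_unit; apply: inj_row_free => x xDD0.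
have : (x *m D)^T^T *m (x *m D)^T = 0.
  by rewrite trmxK trmx_mul !mulmxA -(mulmxA x D) xDD0 !mul0mx.
move/gram_mx_eq0/(congr1 trmx); rewrite trmxK trmx0 => xD0.
by rewrite -[x]mulmx1 -DD' mulmxA xD0 mul0mx.
Qed.

(* A full-rank factorisation A = C D gives the classical formula
   A^+ = D^T (D D^T)^-1 (C^T C)^-1 C^T. *)
Lemma penrose_full_rank_factor n r (A : 'M[R]_n) (C : 'M_(n, r)) D :
  A = C *m D -> row_full C -> row_free D -> exists X, penrose A X.
Proof.
move=> AE Cfull Dfree.
have Cu : C^T *m C \in unitmx.
  by rewrite -[X in _ *m X]trmxK row_free_gram_unit // /row_free mxrank_tr.
have Du := row_free_gram_unit Dfree.
set M := C^T *m C in Cu *; set P := D *m D^T in Du *.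
have Msym : M^T = M by rewrite /M trmx_mul trmxK.
have Psym : P^T = P by rewrite /P trmx_mul trmxK.
exists (D^T *m invmx P *m invmx M *m C^T).
have AX : A *m (D^T *m invmx P *m invmx M *m C^T) = C *m invmx M *m C^T.
  by rewrite AE !mulmxA -(mulmxA C D) -/P mulmxK.
have XA : D^T *m invmx P *m invmx M *m C^T *m A = D^T *m invmx P *m D.
  by rewrite AE !mulmxA -(mulmxA _ C^T C) -/M mulmxKV.
split.
- by rewrite AX AE !mulmxA -(mulmxA _ C^T C) -/M mulmxKV.
- by rewrite XA !mulmxA -(mulmxA _ D D^T) -/P mulmxKV.
- by rewrite AX !trmx_mul trmxK trmx_inv Msym mulmxA.
- by rewrite XA !trmx_mul trmxK trmx_inv Psym mulmxA.
Qed.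

Lemma pinvP n (A : 'M[R]_n) : penrose A (pinv A).
Proof.
apply: epsilon_spec; apply: (penrose_full_rank_factor (esym (mulmx_base A))).
  exact: col_base_full.
exact: row_base_free.
Qed.

Lemma pinv_proj_id n p (A : 'M[R]_n) (Y : 'M[R]_(n, p)) :
  A^T = A -> (forall k : 'cV[R]_n, A *m k = 0 -> Y^T *m k = 0) ->
  A *m pinv A *m Y = Y.
Proof.
move=> Asym kerY; case: (pinvP A); move: (pinv A) => X AXA _ AXsym _.
set K := Y - A *m X *m Y.
have AK : A *m K = 0.
  have AAX : A *m (A *m X) = A by rewrite -{1}Asym -AXsym -trmx_mul AXA Asym.
  by rewrite /K mulmxBr mulmxA AAX subrr.
have YK : Y^T *m K = 0.
  apply/matrixP => i j; have := kerY (col j K).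
  rewrite colE mulmxA AK mul0mx => /(_ erefl) /matrixP /(_ i 0).
  by rewrite mulmxA -colE !mxE.
have AXK : A *m X *m K = 0 by rewrite /K mulmxBr !mulmxA AXA subrr.
have KT : K^T = Y^T - Y^T *m (A *m X) by rewrite /K linearB /= trmx_mul AXsym.
have : K^T *m K = 0 by rewrite KT mulmxBl YK -mulmxA AXK mulmx0 subrr.
by move/gram_mx_eq0/eqP; rewrite subr_eq0 => /eqP <-.
Qed.

Lemma pinv_supported n (A : 'M[R]_n) S : supported_on A S -> supported_on (pinv A) S.
Proof.
move=> A0 i j; case: (pinvP A); move: (pinv A) => X _ XAX AXsym XAsym.
case/orP => Sij.
- have -> : X = A^T *m X^T *m X by rewrite -trmx_mul XAsym XAX.
  rewrite -mulmxA mxE big1 // => k _; rewrite mxE A0 ?mul0r //.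
  by rewrite Sij orbT.
- have -> : X = X *m X^T *m A^T by rewrite -mulmxA -trmx_mul AXsym mulmxA XAX.
  by rewrite mxE big1 // => k _; rewrite [A^T k j]mxE A0 ?mulr0 // Sij.
Qed.

End Pseudoinverse.

Section Laplacian.
Variables (R : rcfType) (n : nat).
Implicit Types (A : 'M[R]_n) (S : {set 'I_n}) (x : 'I_n -> R).

Definition quad_form A x : R := \sum_i \sum_j x i * A i j * x j.

Lemma lap_sym A : is_lap A -> A^T = A.
Proof. by case=> Asym _ _; apply/matrixP => i j; rewrite mxE Asym. Qed.

Lemma lap_colsum A j : is_lap A -> \sum_i A i j = 0.
Proof. by case=> Asym _ Arow; rewrite -[RHS](Arow j); apply: eq_bigr => i _. Qed.

Lemma lap_mul_sum A (p : 'cV[R]_n) : is_lap A -> \sum_i (A *m p) i 0 = 0.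
Proof.
move=> Alap; under eq_bigr do rewrite mxE.
by rewrite exchange_big big1 // => j _; rewrite -mulr_suml lap_colsum ?mul0r.
Qed.

(* [quad_form A x] is [sum_{i,j} (- A i j) (x i - x j)^2 / 2], a sum of
   nonnegative terms. *)
Lemma lap_quad_form_eq0 A x : is_lap A -> quad_form A x = 0 ->
  forall i j, A i j < 0 -> x i = x j.
Proof.
move=> Alap Aq0; have [_ Aneg Arow] := Alap.
have rowsq : \sum_i \sum_j A i j * x i ^+ 2 = 0.
  by rewrite big1 // => i _; rewrite -mulr_suml Arow mul0r.
have colsq : \sum_i \sum_j A i j * x j ^+ 2 = 0.
  by rewrite exchange_big big1 // => j _; rewrite -mulr_suml lap_colsum ?mul0r.
have : \sum_i \sum_j (- A i j) * (x i - x j) ^+ 2 = 0.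
  have -> : \sum_i \sum_j (- A i j) * (x i - x j) ^+ 2 = quad_form A x *+ 2
      - \sum_i \sum_j A i j * x i ^+ 2 - \sum_i \sum_j A i j * x j ^+ 2.
    rewrite -sumrMnl -!sumrB; apply: eq_bigr => i _.
    by rewrite -sumrMnl -!sumrB; apply: eq_bigr => j _; rewrite mulr2n; ring.
  by rewrite Aq0 rowsq colsq mul0rn !subr0.
have term_ge0 i j : 0 <= - A i j * (x i - x j) ^+ 2.
  have [<-|ij] := eqVneq i j; first by rewrite subrr expr0n mulr0.
  by rewrite mulr_ge0 ?sqr_ge0 // oppr_ge0 Aneg.
move=> sum0 i j Aij.
have := psumr_eq0P (fun i _ => sumr_ge0 _ (fun j _ => term_ge0 i j)) sum0 (i := i) isT.
move/psumr_eq0P => /(_ (fun j _ => term_ge0 i j)) /(_ j isT) /eqP.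
by rewrite mulf_eq0 oppr_eq0 (negbTE (ltr0_neq0 Aij)) /= sqrf_eq0 subr_eq0 => /eqP.
Qed.

Lemma connected_lap_quad_form_eq0 A S x : connected_lap_on A S ->
  quad_form A x = 0 -> {in S &, forall a b, x a = x b}.
Proof.
case=> Alap _ Aconn Aq0 a b aS bS; apply/eqP.
have Acl : closed (fun i j => A i j < 0) [pred k | x k == x b].
  by move=> i j /(lap_quad_form_eq0 Alap Aq0) xij; rewrite !inE /= xij.
by rewrite -[_ == _]/(a \in [pred k | x k == x b]) (closed_connect Acl (Aconn a b aS bS)) inE.
Qed.

Lemma quad_form_ker A (k : 'cV[R]_n) : A *m k = 0 -> quad_form A (fun i => k i 0) = 0.
Proof.
move=> Ak0; apply: big1 => i _.
have : (A *m k) i 0 = 0 by rewrite Ak0 mxE.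
rewrite mxE => Aki0; transitivity (k i 0 * \sum_j A i j * k j 0).
  by rewrite mulr_sumr; apply: eq_bigr => j _; rewrite mulrA.
by rewrite Aki0 mulr0.
Qed.

Lemma quad_form_submx_pad A S x :
  quad_form (submx_pad A S S) x = quad_form A (fun i => if i \in S then x i else 0).
Proof.
apply: eq_bigr => i _; apply: eq_bigr => j _; rewrite mxE.
by case: (i \in S); case: (j \in S); rewrite ?mulr0 ?mul0r.
Qed.

End Laplacian.

Section Incidence.
Variables (R : nzRingType) (n m : nat) (tl hd : 'I_m -> 'I_n).

Lemma sum_mem_indicator (U : {set 'I_n}) a : \sum_(i in U) ((i == a)%:R : R) = (a \in U)%:R.
Proof.
have [aU | aU] := boolP (a \in U).
  by rewrite (bigD1 a) //= eqxx big1 ?addr0 // => i /andP [_ /negbTE ->].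
by rewrite big1 // => i iU; have -> : (i == a) = false by apply: contraNF aU => /eqP <-.
Qed.

Lemma incidence_sum_closed (U : {set 'I_n}) (y : 'cV[R]_m) :
  (forall e, (tl e \in U) = (hd e \in U)) ->
  \sum_(i in U) ((incidence R tl hd)^T *m y) i 0 = 0.
Proof.
move=> Uclosed; under eq_bigr do rewrite mxE.
rewrite exchange_big big1 // => e _; rewrite -mulr_suml.
under eq_bigr do rewrite mxE mxE.
by rewrite sumrB !sum_mem_indicator Uclosed subrr mul0r.
Qed.

End Incidence.

Section SeparatorTree.
Variables (n m : nat) (tl hd : 'I_m -> 'I_n) (N : finType) (T : stree N n m).
Hypothesis Tsep : is_septree tl hd T.

Local Notation F := (st_F T).
Local Notation bd := (st_bd T).
Local Notation V := (Vset tl hd).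
Local Notation desc_of H := (connect (chrel T) H).

Lemma septree_reach H : desc_of (st_root T) H.
Proof. by case: Tsep. Qed.

Lemma septree_acyclic H D : chrel T H D -> ~~ desc_of D H.
Proof. by case: Tsep => _ [_ [acyc _]]; apply: acyc. Qed.

Lemma septree_root_E : st_E T (st_root T) = setT.
Proof. by case: Tsep => _ [_ [_ [rootE _]]]. Qed.

Lemma septree_root_bd : bd (st_root T) = set0.
Proof. by case: Tsep => _ [_ [_ [_ [root_bd _]]]]. Qed.

Lemma septree_node H D1 D2 : st_ch T H = Some (D1, D2) ->
  [/\ D1 != D2,
      st_E T D1 :|: st_E T D2 = st_E T H /\ [disjoint st_E T D1 & st_E T D2],
      V (st_E T D1) :&: V (st_E T D2) = st_S T H,
      bd D1 = (bd H :|: st_S T H) :&: V (st_E T D1) /\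
      bd D2 = (bd H :|: st_S T H) :&: V (st_E T D2) &
      F H = st_S T H :\: bd H].
Proof. by case: Tsep => _ [_ [_ [_ [_ [node _]]]]]; apply: node. Qed.

Lemma septree_leaf H : st_ch T H = None ->
  st_S T H = set0 /\ F H = V (st_E T H) :\: bd H.
Proof. by case: Tsep => _ [_ [_ [_ [_ [_ [leaf _]]]]]]; apply: leaf. Qed.

Lemma septree_F_cover v : exists H, v \in F H.
Proof. by case: Tsep => _ [_ [_ [_ [_ [_ [_ [cover _]]]]]]]. Qed.

Lemma septree_F_uniq H1 H2 v : v \in F H1 -> v \in F H2 -> H1 = H2.
Proof. by case: Tsep => _ [_ [_ [_ [_ [_ [_ [_ uniq]]]]]]]; apply: uniq. Qed.

Lemma bd_notin_F H v : v \in bd H -> v \notin F H.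
Proof.
move=> vbd; case chH: (st_ch T H) => [[D1 D2]|].
- by case: (septree_node chH) => _ _ _ _ ->; rewrite in_setD vbd.
- by case: (septree_leaf chH) => _ ->; rewrite in_setD vbd.
Qed.

Lemma chrel_fst H D1 D2 : st_ch T H = Some (D1, D2) -> chrel T H D1.
Proof. by rewrite /chrel => ->; rewrite eqxx. Qed.

Lemma chrel_snd H D1 D2 : st_ch T H = Some (D1, D2) -> chrel T H D2.
Proof. by rewrite /chrel => ->; rewrite eqxx orbT. Qed.

Lemma chrelP H D : chrel T H D ->
  exists D1 D2, st_ch T H = Some (D1, D2) /\ (D = D1 \/ D = D2).
Proof.
rewrite /chrel; case: (st_ch T H) => [[D1 D2]|] //.
by case/orP => /eqP ->; exists D1, D2; auto.
Qed.

Lemma chrel_sibling H D : chrel T H D -> exists D',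
  [/\ st_E T D :|: st_E T D' = st_E T H,
      V (st_E T D) :&: V (st_E T D') = st_S T H,
      bd D = (bd H :|: st_S T H) :&: V (st_E T D) &
      F H = st_S T H :\: bd H].
Proof.
case/chrelP => D1 [D2 [chH [->|->]]];
  case: (septree_node chH) => _ [EU _] VI [bd1 bd2] FH.
- by exists D2.
- by exists D1; rewrite setUC setIC.
Qed.

Lemma bd_chrel H D v : chrel T H D -> v \in bd D -> v \in bd H \/ v \in F H.
Proof.
case/chrel_sibling => D' [_ _ -> ->]; rewrite !inE.
by case/andP => /orP [-> | ->]; [left | case: (v \in bd H); [left | right]].
Qed.

Definition desc H := [set D | desc_of H D].

Lemma card_desc_gt0 H : (0 < #|desc H|)%N.
Proof. by apply/card_gt0P; exists H; rewrite inE connect0. Qed.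

Lemma desc_chrel_proper H D : chrel T H D -> desc D \proper desc H.
Proof.
move=> HD; apply/properP; split.
  by apply/subsetP => x; rewrite !inE; apply: connect_trans (connect1 HD).
by exists H; rewrite inE ?connect0 ?septree_acyclic.
Qed.

Lemma card_desc_connect_lt H D : desc_of H D -> D != H -> (#|desc D| < #|desc H|)%N.
Proof.
case/connectP => [[|D' p]] /=; first by move=> _ ->; rewrite eqxx.
case/andP => HD' D'p Dlast _; apply: leq_ltn_trans (proper_card (desc_chrel_proper HD')).
apply/subset_leq_card/subsetP => x; rewrite !inE; apply: connect_trans.
by apply/connectP; exists p.
Qed.

Fixpoint height_le (k : nat) (H : N) : bool :=
  match st_ch T H, k with
  | None, _ => true
  | Some _, 0 => false
  | Some (D1, D2), k'.+1 => height_le k' D1 && height_le k' D2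
  end.

Lemma height_le_leaf k H : st_ch T H = None -> height_le k H.
Proof. by case: k => [|k] /=; case: (st_ch T H). Qed.

Lemma height_le_mono k k' H : (k <= k')%N -> height_le k H -> height_le k' H.
Proof.
elim: k' k H => [|k' IH] [|k] H //=; case: (st_ch T H) => [[D1 D2]|] //.
by rewrite ltnS => kk' /andP [h1 h2]; rewrite !(IH k).
Qed.

Lemma height_le_card_desc H : height_le #|desc H|.-1 H.
Proof.
elim: {H}_.+1 {-2}H (ltnSn #|desc H|) => // k IH H Hk.
case chH: (st_ch T H) => [[D1 D2]|]; last exact: height_le_leaf.
have lt1 := proper_card (desc_chrel_proper (chrel_fst chH)).
have lt2 := proper_card (desc_chrel_proper (chrel_snd chH)).
have gt1 := card_desc_gt0 D1; have gt2 := card_desc_gt0 D2.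
have -> : #|desc H|.-1 = #|desc H|.-2.+1 by move: lt1 gt1; clear; lia.
rewrite /= chH; apply/andP; split.
- by apply: height_le_mono (IH _ _); move: lt1 gt1 Hk; clear; lia.
- by apply: height_le_mono (IH _ _); move: lt2 gt2 Hk; clear; lia.
Qed.

Lemma height_le_card H : height_le #|N|.-1 H.
Proof. by apply: height_le_mono (height_le_card_desc H); rewrite -!subn1 leq_sub2r ?max_card. Qed.

Lemma height_le_lvl_fuel k H : height_le k H -> height_le (lvl_fuel T k H) H.
Proof.
elim: k H => [|k IH] H; case chH: (st_ch T H) => [[D1 D2]|] /=; rewrite chH //= ?chH //.
case/andP => /IH h1 /IH h2.
by rewrite (height_le_mono _ h1) ?(height_le_mono _ h2) ?leq_maxl ?leq_maxr.
Qed.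

Lemma lvl_fuel_stable k k' H : height_le k H -> (k <= k')%N -> lvl_fuel T k' H = lvl_fuel T k H.
Proof.
elim: k k' H => [|k IH] [|k'] H //=; case chH: (st_ch T H) => [[D1 D2]|] //=.
by rewrite ltnS => /andP [h1 h2] kk'; rewrite (IH k' _ h1) ?(IH k' _ h2).
Qed.

Lemma height_le_level H : height_le (level T H) H.
Proof. by apply: height_le_lvl_fuel; apply: height_le_mono (height_le_card H); exact: leq_pred. Qed.

Lemma level_chrel_lt H D : chrel T H D -> (level T D < level T H)%N.
Proof.
case/chrelP => D1 [D2 [chH HD]]; rewrite /level.
have : (0 < #|N|)%N by apply/card_gt0P; exists H.
move: (height_le_card D1) (height_le_card D2); case: #|N| => // K h1 h2 _.
case: HD => ->.
- by rewrite (lvl_fuel_stable h1 (leqnSn K)) /= chH ltnS leq_maxl.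
- by rewrite (lvl_fuel_stable h2 (leqnSn K)) /= chH ltnS leq_maxr.
Qed.

Lemma level_path H p : path (chrel T) H p -> (level T (last H p) + size p <= level T H)%N.
Proof.
elim: p H => [|D p IH] H /=; first by rewrite addn0.
by case/andP => HD Dp; rewrite addnS; apply: leq_ltn_trans (IH D Dp) (level_chrel_lt HD).
Qed.

Lemma level_lt_height H : H != st_root T -> (level T H < height T)%N.
Proof.
move=> Hroot; case/connectP: (septree_reach H) => [[|D p] rp Hlast].
  by rewrite Hlast eqxx in Hroot.
by have := level_path rp; rewrite -Hlast /height /= addnS; apply: leq_trans; rewrite ltnS leq_addr.
Qed.

Lemma bd_in_ancestor_F H v : v \in bd H ->
  exists A, [/\ v \in F A, (level T H < level T A)%N & desc_of A H].
Proof.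
case/connectP: (septree_reach H) => p; elim/last_ind: p H => [|p P IH] H.
  by move=> _ -> ; rewrite septree_root_bd in_set0.
rewrite rcons_path last_rcons => /andP [rp PH] -> {H}.
set P' := last (st_root T) p in PH *.
have P'H : desc_of P' P by apply: connect1.
move=> vbd; have [vbdP' | vFP'] := bd_chrel PH vbd; last by exists P'; rewrite level_chrel_lt.
have [A [vFA ltA AP']] := IH P' rp erefl vbdP'.
by exists A; rewrite vFA (ltn_trans (level_chrel_lt PH)) ?(connect_trans AP').
Qed.

Lemma bd_notin_F_level H H' v : (level T H <= level T H')%N -> v \in bd H' -> v \notin F H.
Proof.
move=> le_HH' /bd_in_ancestor_F [A [vFA ltA _]]; apply/negP => /septree_F_uniq /(_ vFA) HA.
by move: (leq_ltn_trans le_HH' ltA); rewrite HA ltnn.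
Qed.

Definition subtree_F H := [set v | [exists D, desc_of H D && (v \in F D)]].

Lemma mem_subtree_F H D v : desc_of H D -> v \in F D -> v \in subtree_F H.
Proof. by move=> HD vF; rewrite inE; apply/existsP; exists D; rewrite HD vF. Qed.

Lemma subtree_F_chrel H D : chrel T H D -> subtree_F D \subset subtree_F H.
Proof.
move=> HD; apply/subsetP => v /[!inE] /existsP [D' /andP [DD' vF]].
by apply/existsP; exists D'; rewrite vF (connect_trans (connect1 HD) DD').
Qed.

Lemma bd_desc H D v : desc_of H D -> v \in bd D -> v \in bd H :|: subtree_F H.
Proof.
case/connectP => p; elim/last_ind: p D => [|p D' IH] D.
  by move=> _ -> vbd; rewrite in_setU vbd.
rewrite rcons_path last_rcons => /andP [rp HD] -> {D} vbd.
have [vbd' | vF] := bd_chrel HD vbd; first exact: IH rp erefl vbd'.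
by rewrite in_setU (mem_subtree_F _ vF) ?orbT //; apply/connectP; exists p.
Qed.

Lemma bd_nondesc H D v : ~~ desc_of H D -> v \in bd D -> v \notin subtree_F H.
Proof.
move=> HD /bd_in_ancestor_F [A [vFA _ AD]].
apply/negP; rewrite inE => /existsP [D' /andP [HD' vFD']].
by rewrite (septree_F_uniq vFD' vFA) in HD'; rewrite (connect_trans HD' AD) in HD.
Qed.

Lemma Vset_sub (E1 E2 : {set 'I_m}) v : E1 \subset E2 -> v \in V E1 -> v \in V E2.
Proof.
move=> /subsetP E12; rewrite !inE => /existsP [e /andP [eE1 ve]].
by apply/existsP; exists e; rewrite E12.
Qed.

Lemma E_desc H D : desc_of H D -> st_E T D \subset st_E T H.
Proof.
case/connectP => p; elim/last_ind: p D => [|p D' IH] D; first by move=> _ ->.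
rewrite rcons_path last_rcons => /andP [rp HD] -> {D}.
case/chrel_sibling: HD => D'' [EU _ _ _].
by apply: subset_trans (IH _ rp erefl); rewrite -EU subsetUl.
Qed.

Lemma F_sub_V H v : v \in F H -> v \in V (st_E T H).
Proof.
case chH: (st_ch T H) => [[D1 D2]|].
- case: (septree_node chH) => _ _ <- _ ->; rewrite in_setD in_setI.
  case/andP => _ /andP [vV _]; apply: Vset_sub vV.
  by apply: E_desc; apply: connect1 (chrel_fst chH).
- by case: (septree_leaf chH) => _ ->; rewrite in_setD => /andP [].
Qed.

Lemma subtree_F_sub_V H v : v \in subtree_F H -> v \in V (st_E T H).
Proof. by rewrite inE => /existsP [D /andP [HD vF]]; apply: Vset_sub (E_desc HD) (F_sub_V vF). Qed.

Lemma V_sub_bd_subtree_F H v : v \in V (st_E T H) -> v \in bd H :|: subtree_F H.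
Proof.
elim: {H}_.+1 {-2}H (ltnSn #|desc H|) v => // k IH H Hk v.
case chH: (st_ch T H) => [[D1 D2]|]; last first.
  case: (septree_leaf chH) => _ FH vV; rewrite in_setU.
  by case: (boolP (v \in bd H)) => //= vbd; rewrite (mem_subtree_F (connect0 _ _)) // FH in_setD vbd.
case: (septree_node chH) => _ [EU _] _ [bd1 bd2] FH.
have in_child D : chrel T H D -> bd D = (bd H :|: st_S T H) :&: V (st_E T D) ->
    v \in V (st_E T D) -> v \in bd H :|: subtree_F H.
  move=> HD bdD vV; have ltD := proper_card (desc_chrel_proper HD).
  have := IH D (leq_trans ltD Hk) v vV; rewrite !in_setU => /orP [vbd | vF].
  - move: vbd; rewrite bdD in_setI in_setU => /andP [/orP [-> // | vS] _].
    case: (boolP (v \in bd H)) => //= vbd.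
    by rewrite (mem_subtree_F (connect0 _ _)) // FH in_setD vbd.
  - by rewrite (subsetP (subtree_F_chrel HD)) ?orbT.
rewrite -EU in_set => /existsP [e /andP [/setUP [eE | eE] ve]].
- by apply: in_child (chrel_fst chH) bd1 _; rewrite in_set; apply/existsP; exists e; rewrite eE.
- by apply: in_child (chrel_snd chH) bd2 _; rewrite in_set; apply/existsP; exists e; rewrite eE.
Qed.

Lemma V_cut_bd H v : v \in V (st_E T H) -> v \in V (~: st_E T H) -> v \in bd H.
Proof.
case/connectP: (septree_reach H) => p; elim/last_ind: p H => [|p P IH] H.
  by move=> _ -> _; rewrite septree_root_E setCT inE => /existsP [e]; rewrite in_set0.
rewrite rcons_path last_rcons => /andP [rp PH] -> {H}.
set P' := last (st_root T) p in PH *.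
case: (chrel_sibling PH) => D' [EU VI bdP _] vV.
rewrite inE => /existsP [e /andP [eE ve]].
rewrite bdP in_setI vV andbT in_setU.
case: (boolP (e \in st_E T P')) => eP'.
- have eD' : e \in st_E T D'.
    by move: eP' eE; rewrite -EU in_setU in_setC => /orP [-> | ->].
  apply/orP; right; rewrite -VI in_setI vV /= inE.
  by apply/existsP; exists e; rewrite eD'.
- apply/orP; left; apply: (IH P' rp erefl).
  + by apply: Vset_sub vV; apply: E_desc; apply: connect1.
  + by rewrite inE; apply/existsP; exists e; rewrite inE eP'.
Qed.

Lemma subtree_F_edge_closed H e : bd H = set0 ->
  (tl e \in subtree_F H) = (hd e \in subtree_F H).
Proof.
move=> bd0; have VF v : v \in V (st_E T H) -> v \in subtree_F H.
  by move/V_sub_bd_subtree_F; rewrite bd0 set0U.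
case: (boolP (e \in st_E T H)) => eE.
  by rewrite !VF // inE; apply/existsP; exists e; rewrite eE eqxx ?orbT.
have notF v : (tl e == v) || (hd e == v) -> v \notin subtree_F H.
  move=> ve; apply/negP => /subtree_F_sub_V vV.
  suff : v \in bd H by rewrite bd0 in_set0.
  by apply: V_cut_bd vV _; rewrite inE; apply/existsP; exists e; rewrite inE eE.
by rewrite (negbTE (notF _ _)) ?eqxx // (negbTE (notF (hd e) _)) ?eqxx ?orbT.
Qed.

End SeparatorTree.

Section Operators.
Variables (R : rcfType) (n m : nat) (tl hd : 'I_m -> 'I_n) (w : 'I_m -> R)
  (N : finType) (T : stree N n m) (L SCt : N -> 'M[R]_n).
Hypothesis w_gt0 : forall e, 0 < w e.
Hypothesis Tsep : is_septree tl hd T.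
Hypothesis Trec : rec_laplacians tl hd w T L SCt.

Local Notation F := (st_F T).
Local Notation bd := (st_bd T).
Local Notation B := (incidence R tl hd).
Local Notation LFF H := (submx_pad (L H) (st_F T H) (st_F T H)).
Local Notation X := (Xop T L).

Lemma lap_leaf H : st_ch T H = None ->
  L H = (restrict_rows (st_E T H) B)^T *m Wmx w *m restrict_rows (st_E T H) B.
Proof. by case: Trec => leaf _; apply: leaf. Qed.

Lemma lap_node H D1 D2 : st_ch T H = Some (D1, D2) -> L H = SCt D1 + SCt D2.
Proof. by case: Trec => _ [_ [node _]]; apply: node. Qed.

Lemma SCt_lap D : is_lap (SCt D) /\ supported_on (SCt D) (bd D).
Proof. by case: Trec => _ [SC _]. Qed.

Lemma lap_connected H : connected_lap_on (L H) (bd H :|: F H).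
Proof. by case: Trec => _ [_ [_ conn]]. Qed.

Lemma LFF_sym H : (LFF H)^T = LFF H.
Proof.
case: (lap_connected H) => [[Lsym _ _] _ _].
by apply/matrixP => i j; rewrite !mxE andbC Lsym.
Qed.

Lemma LFFinv_supported H : supported_on (LFFinv T L H) (F H).
Proof.
by apply: pinv_supported => a b abF; rewrite mxE; case: ifP abF => // /andP [-> ->].
Qed.

Lemma LFFinv_row0 H i k : i \notin F H -> LFFinv T L H i k = 0.
Proof. by move=> iF; rewrite LFFinv_supported ?iF. Qed.

Lemma LFFinv_col0 H i k : k \notin F H -> LFFinv T L H i k = 0.
Proof. by move=> kF; rewrite LFFinv_supported ?kF ?orbT. Qed.

Lemma LFF_ker_restrict H (k : 'cV[R]_n) : LFF H *m k = 0 ->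
  {in bd H :|: F H &, forall a b,
    (if a \in F H then k a 0 else 0) = (if b \in F H then k b 0 else 0)}.
Proof.
move=> kerk; apply: (connected_lap_quad_form_eq0 (lap_connected H)).
by rewrite -quad_form_submx_pad quad_form_ker.
Qed.

(* On [F H] the vectors orthogonal to the kernel of [LFF H] are all vectors when
   [H] has a boundary vertex (the kernel is then trivial), and the vectors
   summing to zero otherwise. *)
Lemma LFF_pinv_restrict H (u : 'cV[R]_n) :
  bd H != set0 \/ \sum_(i in F H) u i 0 = 0 ->
  LFF H *m LFFinv T L H *m u = vrestrict u (F H).
Proof.
move=> bd_or_sum0; rewrite -mulmxA.
have -> : LFFinv T L H *m u = LFFinv T L H *m vrestrict u (F H).
  apply/matrixP => i j; rewrite !mxE; apply: eq_bigr => k _.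
  by rewrite !mxE (ord1 j); case: ifP => // /negbT /LFFinv_col0 ->; rewrite !mul0r.
rewrite mulmxA; apply: pinv_proj_id; first exact: LFF_sym.
move=> k /LFF_ker_restrict kconst; apply/matrixP => a b; rewrite (ord1 a) (ord1 b) !mxE.
have inS v : v \in F H -> v \in bd H :|: F H by move=> vF; rewrite in_setU vF orbT.
case: bd_or_sum0 => [/set0Pn [b0 b0bd] | sum0].
  rewrite big1 // => i _; rewrite !mxE; case: ifP => iF; last by rewrite mul0r.
  have b0S : b0 \in bd H :|: F H by rewrite in_setU b0bd.
  have := kconst i b0 (inS _ iF) b0S; rewrite iF (negbTE (bd_notin_F Tsep b0bd)).
  by move=> ->; rewrite mulr0.
case: (set_0Vmem (F H)) => [F0 | [f fF]].
  by rewrite big1 // => i _; rewrite !mxE F0 in_set0 mul0r.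
rewrite (eq_bigr (fun i => (if i \in F H then u i 0 else 0) * k f 0)).
  by rewrite -mulr_suml -big_mkcond /= sum0 mul0r.
move=> i _; rewrite !mxE; case: ifP => iF; last by rewrite !mul0r.
by have := kconst i f (inS _ iF) (inS _ fF); rewrite iF fF => ->.
Qed.

(* The columns of [SCt D] sum to zero and live on [bd D], so they are orthogonal
   to the kernel of [L D], which consists of the vectors constant on its support. *)
Lemma lap_pinv_SCt D : L D *m pinv (L D) *m SCt D = SCt D.
Proof.
have [Llap _ _] := lap_connected D.
apply: pinv_proj_id; first exact: lap_sym.
move=> k /quad_form_ker kerk.
have kconst := connected_lap_quad_form_eq0 (lap_connected D) kerk.
have [[SCsym _ SCrow] SCsupp] := SCt_lap D.
apply/matrixP => j a; rewrite (ord1 a) !mxE.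
case: (set_0Vmem (bd D)) => [bd0 | [b bbd]].
  by rewrite big1 // => i _; rewrite mxE SCsupp ?mul0r // bd0 in_set0.
transitivity (\sum_i SCt D j i * k b 0); last by rewrite -mulr_suml SCrow mul0r.
apply: eq_bigr => i _; rewrite mxE SCsym; case: (boolP (i \in bd D)) => ibd.
  by rewrite (kconst i b) // in_setU ?ibd ?bbd.
by rewrite SCsupp ?ibd ?orbT // !mul0r.
Qed.

Lemma leafM_gram H :
  B^T *m sqrtW w *m leafM tl hd w T H =
  (restrict_rows (st_E T H) B)^T *m Wmx w *m restrict_rows (st_E T H) B.
Proof.
have sqrtWK : sqrtW w *m sqrtW w = Wmx w.
  rewrite /sqrtW /Wmx mulmx_diag; congr diag_mx; apply/matrixP => i j.
  by rewrite !mxE -expr2 sqr_sqrtr // ltW.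
rewrite /leafM mulmxA -(mulmxA B^T (sqrtW w) (sqrtW w)) sqrtWK.
apply/matrixP => a b; rewrite !mxE; apply: eq_bigr => e _.
by rewrite /Wmx !mul_mx_diag !mxE; case: ifP; rewrite ?mulr0.
Qed.

Lemma Mrec_gram k H : height_le T k H -> B^T *m sqrtW w *m Mrec tl hd w T L SCt k H = L H.
Proof.
elim: k H => [|k IH] H; case chH: (st_ch T H) => [[D1 D2]|] /=; rewrite ?chH //=;
  try by rewrite leafM_gram (lap_leaf chH).
case/andP => /IH M1 /IH M2.
by rewrite mulmxDr !mulmxA M1 M2 !lap_pinv_SCt (lap_node chH).
Qed.

Lemma Mop_gram H : B^T *m sqrtW w *m Mop tl hd w T L SCt H = L H.
Proof. exact: Mrec_gram (height_le_level Tsep H). Qed.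

Lemma Xop_col0 H i k : k \notin F H -> X H i k = 0.
Proof. by move=> kF; rewrite mxE big1 // => l _; rewrite LFFinv_col0 ?mulr0. Qed.

Lemma Xop_row0 H k j : k \notin bd H -> X H k j = 0.
Proof. by move=> kbd; rewrite mxE big1 // => l _; rewrite mxE (negbTE kbd) mul0r. Qed.

Lemma Xop_bd0 H : bd H = set0 -> X H = 0.
Proof. by move=> bd0; apply/matrixP => i j; rewrite Xop_row0 ?mxE // bd0 in_set0. Qed.

Lemma Xop_mul0 H H' : (level T H <= level T H')%N -> X H *m X H' = 0.
Proof.
move=> le_HH'; apply/matrixP => i j; rewrite [LHS]mxE [RHS]mxE big1 // => k _.
have [kbd | kbd] := boolP (k \in bd H').
  by rewrite Xop_col0 ?mul0r // (bd_notin_F_level Tsep le_HH' kbd).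
by rewrite (Xop_row0 _ kbd) mulr0.
Qed.

(* [L H] acts on vectors supported on [F H] through its [F H]-rows [LFF H] and
   its [bd H]-rows, which form [X H] after the pseudoinverse. *)
Lemma lap_mul_LFFinv H (u : 'cV[R]_n) :
  L H *m (LFFinv T L H *m u) = LFF H *m LFFinv T L H *m u + X H *m u.
Proof.
rewrite /Xop -!mulmxA -mulmxDl.
have supp_p l j : l \notin F H -> (LFFinv T L H *m u) l j = 0.
  by move=> lF; rewrite mxE big1 // => k _; rewrite LFFinv_row0 ?mul0r.
move: (LFFinv T L H *m u) supp_p => p supp_p.
have [_ Lsupp _] := lap_connected H.
apply/matrixP => i j; rewrite !mxE; apply: eq_bigr => l _.
have [lF | lF] := boolP (l \in F H); last by rewrite supp_p // !mulr0.
rewrite !mxE lF !andbT.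
have [iF | iF] := boolP (i \in F H).
  by rewrite ifN ?addr0 //; apply/negP => /(bd_notin_F Tsep); rewrite iF.
have [ibd | ibd] := boolP (i \in bd H); first by rewrite add0r.
by rewrite Lsupp ?add0r // in_setU (negbTE ibd) (negbTE iF).
Qed.

Lemma sum_LFF_pinv H (u : 'cV[R]_n) :
  \sum_i (LFF H *m LFFinv T L H *m u) i 0 = - \sum_i (X H *m u) i 0.
Proof.
have [Llap _ _] := lap_connected H.
have := lap_mul_sum (LFFinv T L H *m u) Llap; rewrite lap_mul_LFFinv.
by under eq_bigr do rewrite mxE; rewrite big_split /= => /eqP; rewrite addr_eq0 => /eqP.
Qed.

Lemma Gamma_restrict H (u : 'cV[R]_n) :
  vrestrict (Gamma T L *m u) (F H) = LFFinv T L H *m u.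
Proof.
apply/matrixP => i j; rewrite (ord1 j) mxE; case: ifP => iF.
  rewrite /Gamma mulmx_suml summxE (bigD1 H) //= big1 ?addr0 // => H' H'H.
  rewrite mxE big1 // => l _; rewrite LFFinv_row0 ?mul0r //.
  by apply: contra H'H => iF'; rewrite (septree_F_uniq Tsep iF iF').
by rewrite mxE big1 // => l _; rewrite LFFinv_row0 ?iF ?mul0r.
Qed.

(* Since [X H *m X H' = 0] whenever [level H <= level H'], the factors
   [Pi^(j)] with [j >= level H] do not affect [X H *m Pi^(k-1) ... Pi^(0) d]. *)
Lemma Pi_apply_eq (d : 'cV[R]_n) k :
  Pi_apply T L k d = d - \sum_(H | (level T H < k)%N) X H *m Pi_apply T L k d.
Proof.
elim: k => [|k IH] /=; first by rewrite big_pred0 ?subr0 // => H; rewrite ltn0.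
set P := Pi_apply T L k d in IH *.
have PiP : Piop T L k *m P = P - \sum_(H | level T H == k) X H *m P.
  by rewrite /Piop mulmxBl mul1mx mulmx_suml.
have XPi H : (level T H <= k)%N -> X H *m (Piop T L k *m P) = X H *m P.
  move=> le_Hk; rewrite PiP mulmxBr mulmx_sumr big1 ?subr0 // => H' /eqP lvlH'.
  by rewrite mulmxA Xop_mul0 ?mul0mx ?lvlH'.
rewrite (eq_bigr (fun H => X H *m P)) => [|H]; last by rewrite ltnS; apply: XPi.
rewrite (bigID (fun H => (level T H < k)%N)) /=.
rewrite [S in _ - (S + _)](eq_bigl (fun H => (level T H < k)%N)) => [|H /=]; last by lia.
rewrite [S in _ - (_ + S)](eq_bigl (fun H => level T H == k)) => [|H /=]; last by lia.
by rewrite PiP {1}IH opprD addrA.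
Qed.

Lemma Pi_apply_height (d : 'cV[R]_n) :
  \sum_H X H *m Pi_apply T L (height T) d = d - Pi_apply T L (height T) d.
Proof.
rewrite [in RHS](Pi_apply_eq d (height T)) opprB addrC subrK.
rewrite [LHS](bigID (fun H => (level T H < height T)%N)) /= [S in _ + S]big1 ?addr0 // => H.
have [-> _ | Hroot] := eqVneq H (st_root T).
  by rewrite Xop_bd0 ?mul0mx // (septree_root_bd Tsep).
by rewrite (level_lt_height Tsep Hroot).
Qed.

Lemma sum_subtree_F H (x : 'I_n -> R) :
  \sum_(i in subtree_F T H) x i = \sum_(D | connect (chrel T) H D) \sum_(i in F D) x i.
Proof.
under [RHS]eq_bigr do rewrite big_mkcond /=.
rewrite exchange_big big_mkcond /=; apply: eq_bigr => i _.
case: (septree_F_cover Tsep i) => D0 iF0.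
have notF D : D != D0 -> i \notin F D.
  by apply: contra => iF; rewrite (septree_F_uniq Tsep iF iF0).
have [HD0 | HD0] := boolP (connect (chrel T) H D0).
  rewrite (mem_subtree_F HD0 iF0) (bigD1 D0) //= iF0 big1 ?addr0 // => D /andP [_ DD0].
  by rewrite (negbTE (notF _ DD0)).
rewrite big1 => [|D HD]; last by rewrite ifN // notF //; apply: contraNneq HD0 => <-.
rewrite ifN //; apply/negP; rewrite inE => /existsP [D /andP [HD iF]].
by rewrite -(septree_F_uniq Tsep iF iF0) HD in HD0.
Qed.

Section Correctness.
Variable v : 'cV[R]_m.
Let d := B^T *m sqrtW w *m v.
Let u := Pi_apply T L (height T) d.

Lemma u_eq : u = d - \sum_H X H *m u.
Proof. by rewrite /u Pi_apply_height opprB addrC subrK. Qed.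

Lemma sum_subtree_F_u H : bd H = set0 ->
  \sum_(i in subtree_F T H) u i 0 =
  \sum_(D | connect (chrel T) H D) \sum_i (LFF D *m LFFinv T L D *m u) i 0.
Proof.
move=> bd0.
under eq_bigr do rewrite {1}u_eq mxE [S in _ + S]mxE summxE.
rewrite sumrB /d -mulmxA incidence_sum_closed ?sub0r; last first.
  by move=> e; apply: subtree_F_edge_closed.
rewrite exchange_big /= (bigID (fun D => connect (chrel T) H D)) /=.
rewrite [S in _ + S]big1 ?addr0 => [|D HD]; last first.
  rewrite big1 // => i iF; rewrite mxE big1 // => k _.
  rewrite Xop_row0 ?mul0r //; apply: contraTN iF => kbd.
  by rewrite (bd_nondesc Tsep HD kbd).
rewrite -sumrN; apply: eq_bigr => D HD; rewrite sum_LFF_pinv; congr (- _).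
rewrite [LHS]big_mkcond /=; apply: eq_bigr => i _.
case: ifP => // /negbT iF; rewrite mxE big1 // => k _.
rewrite Xop_row0 ?mul0r //; apply: contraNN iF => kbd.
by have := bd_desc Tsep HD kbd; rewrite bd0 set0U.
Qed.

Lemma sum_F_bd0_desc H : bd H = set0 ->
  \sum_(D | connect (chrel T) H D && (bd D == set0)) \sum_(i in F D) u i 0 = 0.
Proof.
move=> bd0; have := sum_subtree_F_u bd0; rewrite sum_subtree_F.
move/eqP; rewrite -subr_eq0 -sumrB (bigID (fun D => bd D == set0)) /=.
rewrite [S in _ + S]big1 ?addr0 => [|D /andP [_ bdD]]; last first.
  rewrite LFF_pinv_restrict; last by left.
  rewrite [S in S - _]big_mkcond /=.
  by under [S in _ - S]eq_bigr do rewrite mxE; rewrite subrr.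
move/eqP=> sum0; rewrite -[RHS]sum0; apply: eq_bigr => D /andP [_ /eqP bdD].
rewrite sum_LFF_pinv Xop_bd0 // mul0mx.
by under [S in _ - - S]eq_bigr do rewrite mxE; rewrite big1_eq oppr0 subr0.
Qed.

Lemma sum_F_bd0 H : bd H = set0 -> \sum_(i in F H) u i 0 = 0.
Proof.
elim: {H}_.+1 {-2}H (ltnSn #|desc T H|) => // k IH H Hk bd0.
have := sum_F_bd0_desc bd0; rewrite (bigD1 H) /= ?connect0 ?bd0 ?eqxx //.
rewrite [S in _ + S]big1 ?addr0 // => D /andP [/andP [HD /eqP bdD] DH].
apply: IH bdD; have := card_desc_connect_lt Tsep HD DH; move: Hk; clear; lia.
Qed.

Lemma Mop_flow_demand :
  let z := Gamma T L *m u in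
  B^T *m sqrtW w *m (\sum_H Mop tl hd w T L SCt H *m vrestrict z (F H)) = d.
Proof.
move=> z; rewrite mulmx_sumr.
rewrite (eq_bigr (fun H => vrestrict u (F H) + X H *m u)) => [|H _]; last first.
  rewrite mulmxA Mop_gram /z Gamma_restrict lap_mul_LFFinv LFF_pinv_restrict //.
  by have [bd0 | bd_ne0] := eqVneq (bd H) set0; [right; apply: sum_F_bd0 | left].
rewrite big_split /= /u Pi_apply_height -/u.
suff -> : \sum_H vrestrict u (F H) = u by rewrite addrC subrK.
apply/matrixP => i j; rewrite summxE (ord1 j).
case: (septree_F_cover Tsep i) => D iF.
rewrite (bigD1 D) //= big1 ?mxE ?iF ?addr0 // => D' D'D.
rewrite mxE ifN //; apply: contra D'D => iF'.
by rewrite (septree_F_uniq Tsep iF iF').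
Qed.

End Correctness.

End Operators.

Theorem mainTheorem13 (R : rcfType) (n m : nat) (tl hd : 'I_m -> 'I_n)
  (w : 'I_m -> R) (N : finType) (T : stree N n m) (L SCt : N -> 'M[R]_n) :
  (forall e, tl e != hd e) ->
  (forall e, 0 < w e) ->
  graph_connected tl hd ->
  is_septree tl hd T ->
  rec_laplacians tl hd w T L SCt ->
  forall v : 'cV[R]_m,
    let B := incidence R tl hd in
    let d := B^T *m sqrtW w *m v in
    let z := Gamma T L *m Pi_apply T L (height T) d in
    let ft := \sum_(H : N) Mop tl hd w T L SCt H *m vrestrict z (st_F T H) in
    B^T *m sqrtW w *m ft = B^T *m sqrtW w *m v.
Proof.
move=> _ w_gt0 _ Tsep Trec v B d z ft.
exact: (Mop_flow_demand w_gt0 Tsep Trec v).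
Qed.
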